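(* For any $n$-agent all-pay rank-based mechanism with allocation rule $x$ and any $\delta<1/n$, the equilibrium bid function $b$ satisfies (1) $b(\delta)\le \delta\,e\,x'(\delta)$, and (2) $b(1)-b(1-\delta)\le \delta\,e\,x'(1-\delta)$.
   Context: Agents have values i.i.d. from a continuous distribution $F$ on $[0,1]$; quantile $q=F(v)$ and value function $v(q)=F^{-1}(q)\in[0,1]$. For $k\in\{1,\dots,n-1\}$ the $k$-highest-bids-win allocation rule is $x_k(q)=\sum_{i=0}^{k-1}\binom{n-1}{i}q^{n-1-i}(1-q)^i$; $x_0\equiv0$, $x_n\equiv1$. A rank-based mechanism with position weights $1\ge w_1\ge\cdots\ge w_n\ge 0$ ($w_{n+1}:=0$) has allocation rule $x(q)=\sum_{k=1}^{n}(w_k-w_{k+1})x_k(q)$. In the all-pay format each agent pays his bid; the Bayes–Nash equilibrium bid as a function of quantile is defined by $b(0)=0$ and $b'(q)=v(q)\,x'(q)$. *)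

From Stdlib Require Import Reals Lra Lia.
Open Scope R_scope.

Definition continuous_dist_on_01 (F : R -> R) : Prop :=
  continuity F /\
  (forall a c, a <= c -> F a <= F c) /\
  (forall a, a <= 0 -> F a = 0) /\
  (forall a, 1 <= a -> F a = 1).

(* v = F^{-1}: for each quantile q in [0,1], v q is the least value
   a in [0,1] with F a >= q  (the infimum is attained since F is continuous). *)
Definition is_value_function (F v : R -> R) : Prop :=
  forall q, 0 <= q <= 1 ->
    (0 <= v q <= 1 /\ q <= F (v q)) /\
    (forall a, 0 <= a <= 1 -> q <= F a -> v q <= a).

(* k-highest-bids-win allocation rule x_k (x_0 = 0);
   x_k(q) = sum_{i=0}^{k-1} C(n-1,i) q^{n-1-i} (1-q)^i
   (for k = n this sum is identically 1, matching x_n = 1). *)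
Definition xk (n k : nat) (q : R) : R :=
  match k with
  | O => 0
  | S k' => sum_f_R0 (fun i => C (n - 1) i * q ^ (n - 1 - i) * (1 - q) ^ i) k'
  end.

Definition wext (n : nat) (w : nat -> R) (k : nat) : R :=
  if Nat.eqb k (S n) then 0 else w k.

Definition valid_weights (n : nat) (w : nat -> R) : Prop :=
  w 1%nat <= 1 /\
  (forall k, (1 <= k)%nat -> (k < n)%nat -> w (S k) <= w k) /\
  0 <= w n.

Definition rank_alloc (n : nat) (w : nat -> R) (q : R) : R :=
  sum_f_R0 (fun j => (wext n w (S j) - wext n w (S (S j))) * xk n (S j) q) (n - 1).

(* all-pay equilibrium bid: b(0)=0, b' = v x', i.e. b(q) = int_0^q v(t) x'(t) dt *)
Definition allpay_bid (v dx b : R -> R) : Prop :=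
  b 0 = 0 /\
  forall q, 0 <= q <= 1 ->
    exists pr : Riemann_integrable (fun t => v t * dx t) 0 q, b q = RiemannInt pr.

(* Differentiating the weighted sum of rank rules term by term gives
   x'(q) = sum_k (w_k - w_(k+1)) x_k'(q) with nonnegative weights, where
   x_k'(q) = (n-1) C(n-2,k-1) q^(n-1-k) (1-q)^(k-1).  On [0, delta] the factor
   q^(n-1-k) is largest at delta while (1-q)^(k-1) <= 1 <= e (1-delta)^(n-1),
   the last step because delta < 1/n; symmetrically on [1-delta, 1].  Hence
   x'(t) <= e x'(delta) on [0, delta] (resp. x'(t) <= e x'(1-delta) on
   [1-delta, 1]), and integrating v x' with 0 <= v <= 1 over an interval of
   length delta gives both bounds. *)

From Stdlib Require Import Reals Lra Lia.
From Coquelicot Require Import Coquelicot.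
Open Scope R_scope.

Lemma C_nonneg (m i : nat) : 0 <= Binomial.C m i.
Proof.
  unfold Binomial.C, Rdiv. apply Rmult_le_pos; [left; apply INR_fact_lt_0|].
  left; apply Rinv_0_lt_compat, Rmult_lt_0_compat; apply INR_fact_lt_0.
Qed.

Lemma pow_le_one (x : R) (k : nat) : 0 <= x <= 1 -> x ^ k <= 1.
Proof. intro Hx. rewrite <- (pow1 k). apply pow_incr. lra. Qed.

Lemma exp1_mul_pow_1_sub_ge_1 (k : nat) (d : R) :
  0 <= d < 1 -> INR (S k) * d <= 1 -> 1 <= exp 1 * (1 - d) ^ k.
Proof.
  intros Hd Hkd.
  set (y := d / (1 - d)).
  (* 1 / (1 - d) = 1 + y <= exp y, and k y <= 1 *)
  assert (Hy : 1 <= exp y * (1 - d)).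
  { pose proof (exp_ineq1_le y) as Hexp.
    assert (Hid : (1 + y) * (1 - d) = 1) by (unfold y; field; lra).
    nra. }
  assert (Hky : INR k * y <= 1).
  { rewrite S_INR in Hkd. unfold y.
    apply (Rmult_le_reg_r (1 - d)); [lra|].
    unfold Rdiv. rewrite Rmult_assoc, Rmult_assoc, Rinv_l by lra. lra. }
  assert (Hpow : exp y ^ k = exp (INR k * y)).
  { rewrite <- Rpower_pow by apply exp_pos. unfold Rpower. now rewrite ln_exp. }
  assert (Hle : exp (INR k * y) <= exp 1).
  { destruct (Req_dec (INR k * y) 1) as [E|E]; [rewrite E; lra|].
    left; apply exp_increasing; lra. }
  assert (H1 : 1 <= exp (INR k * y) * (1 - d) ^ k).
  { rewrite <- Hpow, <- Rpow_mult_distr. apply pow_R1_Rle. lra. }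
  assert (0 <= (1 - d) ^ k) by (apply pow_le; lra).
  nra.
Qed.

Lemma derivable_pt_lim_sum_f_R0 (g : nat -> R -> R) (d : nat -> R) (q : R) (N : nat) :
  (forall j, (j <= N)%nat -> derivable_pt_lim (g j) q (d j)) ->
  derivable_pt_lim (fun x => sum_f_R0 (fun j => g j x) N) q (sum_f_R0 d N).
Proof.
  induction N as [|N IH]; intro Hg; [apply Hg; lia|].
  apply (derivable_pt_lim_plus (fun x => sum_f_R0 (fun j => g j x) N) (g (S N))).
  - apply IH. intros j Hj. apply Hg. lia.
  - apply Hg. lia.
Qed.

Definition bern (m i : nat) (q : R) : R := Binomial.C m i * q ^ (m - i) * (1 - q) ^ i.

(* The two parts of the derivative of [bern m i]: from differentiating
   [q ^ (m - i)], resp. [(1 - q) ^ i]. *)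
Definition bern_up (m i : nat) (q : R) : R :=
  Binomial.C m i * INR (m - i) * q ^ pred (m - i) * (1 - q) ^ i.

Definition bern_down (m i : nat) (q : R) : R :=
  Binomial.C m i * INR i * q ^ (m - i) * (1 - q) ^ pred i.

Lemma derivable_pt_lim_bern (m i : nat) (q : R) :
  derivable_pt_lim (bern m i) q (bern_up m i q - bern_down m i q).
Proof.
  apply is_derive_Reals. unfold bern, bern_up, bern_down.
  auto_derive; [easy|]. unfold Rminus.
  generalize (q ^ pred (m - i)) (q ^ (m - i)) ((1 + - q) ^ i) ((1 + - q) ^ pred i).
  intros. ring.
Qed.

Lemma bern_down_S (m i : nat) (q : R) :
  (i < m)%nat -> bern_down m (S i) q = bern_up m i q.
Proof.
  intro Him. unfold bern_down, bern_up. simpl pred.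
  rewrite pascal_step3 by lia.
  replace (m - S i)%nat with (pred (m - i)) by lia.
  assert (INR (S i) <> 0) by (apply not_0_INR; lia).
  generalize (q ^ pred (m - i)) ((1 - q) ^ i). intros. field. assumption.
Qed.

(* The sum telescopes: the [bern_down] part of each term cancels the
   [bern_up] part of the previous one, and [bern_down m 0 = 0]. *)
Lemma derivable_pt_lim_bern_partial_sum (m k : nat) (q : R) :
  (k <= m)%nat ->
  derivable_pt_lim (fun x => sum_f_R0 (fun i => bern m i x) k) q (bern_up m k q).
Proof.
  induction k as [|k IH]; intro Hk.
  - replace (bern_up m 0 q) with (bern_up m 0 q - bern_down m 0 q)
      by (unfold bern_down; simpl INR; ring).
    apply derivable_pt_lim_bern.
  - replace (bern_up m (S k) q)
      with (bern_up m k q + (bern_up m (S k) q - bern_down m (S k) q))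
      by (rewrite bern_down_S by lia; ring).
    apply (derivable_pt_lim_plus (fun x => sum_f_R0 (fun i => bern m i x) k)).
    + apply IH. lia.
    + apply derivable_pt_lim_bern.
Qed.

Lemma bern_up_nonneg (m i : nat) (t : R) : 0 <= t <= 1 -> 0 <= bern_up m i t.
Proof.
  intro Ht. unfold bern_up.
  pose proof (C_nonneg m i). pose proof (pos_INR (m - i)).
  assert (0 <= t ^ pred (m - i)) by (apply pow_le; lra).
  assert (0 <= (1 - t) ^ i) by (apply pow_le; lra).
  apply Rmult_le_pos; [apply Rmult_le_pos; [apply Rmult_le_pos|]|]; assumption.
Qed.

Lemma bern_up_le_near_0 (m i : nat) (t d : R) :
  0 <= t <= d -> d <= 1 -> 1 <= exp 1 * (1 - d) ^ i ->
  bern_up m i t <= exp 1 * bern_up m i d.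
Proof.
  intros Ht Hd He. unfold bern_up.
  assert (HK : 0 <= Binomial.C m i * INR (m - i))
    by (apply Rmult_le_pos; [apply C_nonneg | apply pos_INR]).
  assert (HP : 0 <= t ^ pred (m - i) <= d ^ pred (m - i))
    by (split; [apply pow_le | apply pow_incr]; lra).
  assert (HQ : 0 <= (1 - t) ^ i <= 1)
    by (split; [apply pow_le | apply pow_le_one]; lra).
  revert HK HP HQ He.
  generalize (Binomial.C m i * INR (m - i)) (t ^ pred (m - i)) (d ^ pred (m - i))
    ((1 - t) ^ i) ((1 - d) ^ i) (exp 1).
  intros K P P' Q Q' E HK HP HQ He.
  assert (P * Q <= P') by nra.
  assert (P' <= P' * (E * Q')) by nra.
  nra.
Qed.

Lemma bern_up_le_near_1 (m i : nat) (t d : R) :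
  1 - d <= t <= 1 -> 0 <= d <= 1 -> 1 <= exp 1 * (1 - d) ^ pred (m - i) ->
  bern_up m i t <= exp 1 * bern_up m i (1 - d).
Proof.
  intros Ht Hd He. unfold bern_up. replace (1 - (1 - d)) with d by ring.
  assert (HK : 0 <= Binomial.C m i * INR (m - i))
    by (apply Rmult_le_pos; [apply C_nonneg | apply pos_INR]).
  assert (HP : 0 <= t ^ pred (m - i) <= 1)
    by (split; [apply pow_le | apply pow_le_one]; lra).
  assert (HQ : 0 <= (1 - t) ^ i <= d ^ i)
    by (split; [apply pow_le | apply pow_incr]; lra).
  revert HK HP HQ He.
  generalize (Binomial.C m i * INR (m - i)) (t ^ pred (m - i)) ((1 - d) ^ pred (m - i))
    ((1 - t) ^ i) (d ^ i) (exp 1).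
  intros K P P' Q Q' E HK HP HQ He.
  assert (P * Q <= Q') by nra.
  assert (Q' <= Q' * (E * P')) by nra.
  nra.
Qed.

Definition weight_gap (n : nat) (w : nat -> R) (j : nat) : R :=
  wext n w (S j) - wext n w (S (S j)).

Definition rank_alloc_deriv (n : nat) (w : nat -> R) (q : R) : R :=
  sum_f_R0 (fun j => weight_gap n w j * bern_up (n - 1) j q) (n - 1).

Lemma derivable_pt_lim_rank_alloc (n : nat) (w : nat -> R) (q : R) :
  derivable_pt_lim (rank_alloc n w) q (rank_alloc_deriv n w q).
Proof.
  apply (derivable_pt_lim_sum_f_R0
           (fun j x => weight_gap n w j * sum_f_R0 (fun i => bern (n - 1) i x) j)).
  intros j Hj.
  apply (derivable_pt_lim_scal (fun x => sum_f_R0 (fun i => bern (n - 1) i x) j)).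
  apply derivable_pt_lim_bern_partial_sum. lia.
Qed.

Lemma weight_gap_nonneg (n : nat) (w : nat -> R) (j : nat) :
  valid_weights n w -> (j <= n - 1)%nat -> (1 <= n)%nat -> 0 <= weight_gap n w j.
Proof.
  intros [_ [Hmono Hlast]] Hj Hn. unfold weight_gap, wext.
  destruct (Nat.eqb_spec (S j) (S n)); [lia|].
  destruct (Nat.eqb_spec (S (S j)) (S n)) as [E|Hne].
  - replace (S j) with n by lia. lra.
  - assert (w (S (S j)) <= w (S j)) by (apply Hmono; lia). lra.
Qed.

Lemma sum_f_R0_nonneg (f : nat -> R) (N : nat) :
  (forall j, (j <= N)%nat -> 0 <= f j) -> 0 <= sum_f_R0 f N.
Proof.
  intro Hf. rewrite <- (Rmult_0_l (INR (S N))), <- sum_cte.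
  apply sum_Rle. exact Hf.
Qed.

Section RankAllocDeriv.

Variables (n : nat) (w : nat -> R).
Hypotheses (Hn : (1 <= n)%nat) (Hw : valid_weights n w).

Lemma rank_alloc_deriv_nonneg (t : R) : 0 <= t <= 1 -> 0 <= rank_alloc_deriv n w t.
Proof.
  intro Ht. apply sum_f_R0_nonneg. intros j Hj.
  apply Rmult_le_pos; [now apply weight_gap_nonneg | now apply bern_up_nonneg].
Qed.

Lemma rank_alloc_deriv_le_exp1_mul (t s : R) :
  (forall j, (j <= n - 1)%nat -> bern_up (n - 1) j t <= exp 1 * bern_up (n - 1) j s) ->
  rank_alloc_deriv n w t <= exp 1 * rank_alloc_deriv n w s.
Proof.
  intro Hle. unfold rank_alloc_deriv. rewrite scal_sum.
  apply sum_Rle. intros j Hj.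
  assert (0 <= weight_gap n w j) by now apply weight_gap_nonneg.
  specialize (Hle j Hj). nra.
Qed.

Variable (d : R).
Hypotheses (Hd : 0 < d) (Hdn : INR n * d < 1).

Let HnR : 1 <= INR n.
Proof. apply (le_INR 1). lia. Qed.

Let Hd1 : d < 1.
Proof. nra. Qed.

Let exp1_mul_pow_ge_1 (k : nat) : (k <= n - 1)%nat -> 1 <= exp 1 * (1 - d) ^ k.
Proof.
  intro Hk. apply exp1_mul_pow_1_sub_ge_1; [lra|].
  assert (INR (S k) <= INR n) by (apply le_INR; lia). nra.
Qed.

Lemma rank_alloc_deriv_le_near_0 (t : R) :
  0 <= t <= d -> rank_alloc_deriv n w t <= exp 1 * rank_alloc_deriv n w d.
Proof.
  intro Ht. apply rank_alloc_deriv_le_exp1_mul. intros j Hj.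
  apply bern_up_le_near_0; [assumption | lra | now apply exp1_mul_pow_ge_1].
Qed.

Lemma rank_alloc_deriv_le_near_1 (t : R) :
  1 - d <= t <= 1 -> rank_alloc_deriv n w t <= exp 1 * rank_alloc_deriv n w (1 - d).
Proof.
  intro Ht. apply rank_alloc_deriv_le_exp1_mul. intros j Hj.
  apply bern_up_le_near_1; [assumption | lra | apply exp1_mul_pow_ge_1; lia].
Qed.

End RankAllocDeriv.

Lemma allpay_bid_sub_le (v dx b : R -> R) (a c M : R) :
  allpay_bid v dx b -> 0 <= a <= c -> c <= 1 ->
  (forall t, a < t < c -> v t * dx t <= M) ->
  b c - b a <= M * (c - a).
Proof.
  intros [_ Hb] Hac Hc1 HM.
  destruct (Hb c ltac:(lra)) as [prc ->].
  destruct (Hb a ltac:(lra)) as [pra ->].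
  assert (prac : Riemann_integrable (fun t => v t * dx t) a c)
    by exact (RiemannInt_P24 (RiemannInt_P1 pra) prc).
  rewrite <- (RiemannInt_P26 pra prac prc).
  rewrite <- (RiemannInt_P15 (RiemannInt_P14 a c M)).
  assert (RiemannInt prac <= RiemannInt (RiemannInt_P14 a c M))
    by (apply RiemannInt_P19; [lra | exact HM]).
  lra.
Qed.

Theorem mainTheorem8 :
  forall (n : nat) (w : nat -> R) (F v : R -> R) (dx b : R -> R) (delta : R),
    (1 <= n)%nat ->
    valid_weights n w ->
    continuous_dist_on_01 F ->
    is_value_function F v ->
    (forall q, derivable_pt_lim (rank_alloc n w) q (dx q)) ->
    allpay_bid v dx b ->
    0 < delta -> delta < 1 / INR n ->
    b delta <= delta * exp 1 * dx delta /\
    b 1 - b (1 - delta) <= delta * exp 1 * dx (1 - delta).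
Proof.
  intros n w F v dx b delta Hn Hw _ Hv Hdx Hb Hd Hdn.
  assert (Hdx_eq : forall q, dx q = rank_alloc_deriv n w q)
    by (intro q; exact (uniqueness_limite _ q _ _ (Hdx q) (derivable_pt_lim_rank_alloc n w q))).
  assert (HnR : 1 <= INR n) by (apply (le_INR 1); lia).
  assert (Hnd : INR n * delta < 1).
  { apply (Rmult_lt_compat_l (INR n)) in Hdn; [|lra].
    unfold Rdiv in Hdn. rewrite Rmult_1_l, Rinv_r in Hdn by lra. exact Hdn. }
  assert (Hintegrand : forall t s, 0 <= t <= 1 -> dx t <= exp 1 * dx s ->
                         v t * dx t <= exp 1 * dx s).
  { intros t s Ht Hts. destruct (Hv t Ht) as [[Hv01 _] _].
    assert (0 <= dx t) by (rewrite Hdx_eq; now apply rank_alloc_deriv_nonneg). nra. }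
  split.
  - replace (b delta) with (b delta - b 0) by (destruct Hb as [-> _]; ring).
    replace (delta * exp 1 * dx delta) with (exp 1 * dx delta * (delta - 0)) by ring.
    apply (allpay_bid_sub_le v dx b); [assumption | lra | nra |].
    intros t Ht. apply Hintegrand; [nra|]. rewrite !Hdx_eq.
    apply (rank_alloc_deriv_le_near_0 n w Hn Hw delta); lra.
  - replace (delta * exp 1 * dx (1 - delta))
      with (exp 1 * dx (1 - delta) * (1 - (1 - delta))) by ring.
    apply (allpay_bid_sub_le v dx b); [assumption | nra | lra |].
    intros t Ht. apply Hintegrand; [nra|]. rewrite !Hdx_eq.
    apply (rank_alloc_deriv_le_near_1 n w Hn Hw delta); lra.
Qed.
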